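(* Let $f:\mathbb{R}^n\to\mathbb{R}$ be $L$-smooth and $\mu$-strongly convex with $0<\mu<L$ and minimizer $x_*$, and let $R=\|x^0-x_*\|_2$. Then the iterates of Algorithm AGMsDR-SC (either option) satisfy, for every $k\ge1$, $$f(x^k)-f(x_* )\le\min\left\{\frac{2LR^2}{k^2},\ \left(1-\sqrt{\frac\mu L}\right)^{k-1}LR^2\right\}.$$
   Context: $\|\cdot\|=\|\cdot\|_2$ is the Euclidean norm on $\mathbb{R}^n$. $f$ is $L$-smooth if it is continuously differentiable with $\|\nabla f(x)-\nabla f(y)\|_2\le L\|x-y\|_2$ for all $x,y$; $f$ is $\mu$-strongly convex if $f(y)\ge f(x)+\langle\nabla f(x),y-x\rangle+\frac\mu2\|y-x\|_2^2$ for all $x,y$. Algorithm AGMsDR-SC (input $x^0$, and $L$ for Option (a)): set $A_0=0$, $\tau_0=1$, $v^0=x^0$, $\psi_0(x)=\frac12\|x-x^0\|_2^2$. For $k=0,1,2,\dots$: 1. Choose $\beta_k\in\arg\min_{\beta\in[0,1]} f(v^k+\beta(x^k-v^k))$ and set $y^k=v^k+\beta_k(x^k-v^k)$. 2. Option (a): $x^{k+1}=y^k-\frac1L\nabla f(y^k)$, and $a_{k+1}>0$ solves $\frac{a_{k+1}^2}{(\tau_k+\mu a_{k+1})(A_k+a_{k+1})}=\frac1L$. Option (b): $h_{k+1}\in\arg\min_{h\ge0}f\big(y^k-h\,\nabla f(y^k)/\|\nabla f(y^k)\|_2\big)$, $x^{k+1}=y^k-h_{k+1}\nabla f(y^k)/\|\nabla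 f(y^k)\|_2$, and $a_{k+1}$ is the largest solution of $$f(y^k)-\frac{a_{k+1}^2\|\nabla f(y^k)\|_2^2}{2(\tau_k+\mu a_{k+1})(A_k+a_{k+1})}+\frac{\mu\tau_ka_{k+1}\|v^k-y^k\|_2^2}{2(\tau_k+\mu a_{k+1})(A_k+a_{k+1})}=f(x^{k+1}).$$ 3. $A_{k+1}=A_k+a_{k+1}$, $\tau_{k+1}=\tau_k+\mu a_{k+1}$; $\psi_{k+1}(x)=\psi_k(x)+a_{k+1}\{f(y^k)+\langle\nabla f(y^k),x-y^k\rangle+\frac\mu2\|x-y^k\|_2^2\}$; $v^{k+1}=\arg\min_x\psi_{k+1}(x)$. All minima are assumed attained and $\nabla f(y^k)\neq0$ for all iterations considered. *)

From Stdlib Require Fin.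
From Stdlib Require Import Reals Lra.
Open Scope R_scope.

Definition vec (n : nat) := Fin.t n -> R.

Fixpoint sumFin (n : nat) : (Fin.t n -> R) -> R :=
  match n with
  | O => fun _ => 0
  | S m => fun h => h Fin.F1 + sumFin m (fun i => h (Fin.FS i))
  end.

Definition vadd {n} (x y : vec n) : vec n := fun i => x i + y i.
Definition vsub {n} (x y : vec n) : vec n := fun i => x i - y i.
Definition vscal {n} (c : R) (x : vec n) : vec n := fun i => c * x i.
Definition vzero {n} : vec n := fun _ => 0.
Definition inner {n} (x y : vec n) : R := sumFin n (fun i => x i * y i).
Definition norm2 {n} (x : vec n) : R := sqrt (inner x x).

Definition is_gradient {n} (f : vec n -> R) (g : vec n -> vec n) : Prop :=
  forall x eps, 0 < eps -> exists delta, 0 < delta /\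
    forall h : vec n, 0 < norm2 h < delta ->
      Rabs (f (vadd x h) - f x - inner (g x) h) <= eps * norm2 h.

(* L-smooth: continuously differentiable with L-Lipschitz gradient
   (continuity of the gradient follows from the Lipschitz condition). *)
Definition L_smooth {n} (f : vec n -> R) (g : vec n -> vec n) (L : R) : Prop :=
  is_gradient f g /\
  forall x y, norm2 (vsub (g x) (g y)) <= L * norm2 (vsub x y).

Definition strongly_convex {n} (f : vec n -> R) (g : vec n -> vec n) (mu : R) : Prop :=
  forall x y, f y >= f x + inner (g x) (vsub y x) + mu / 2 * (norm2 (vsub y x)) ^ 2.

Inductive agm_option := OptA | OptB.

Fixpoint psi {n} (f : vec n -> R) (g : vec n -> vec n) (mu : R) (x0 : vec n)
    (y : nat -> vec n) (a : nat -> R) (k : nat) (z : vec n) : R :=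
  match k with
  | O => / 2 * (norm2 (vsub z x0)) ^ 2
  | S j => psi f g mu x0 y a j z +
           a (S j) * (f (y j) + inner (g (y j)) (vsub z (y j))
                      + mu / 2 * (norm2 (vsub z (y j))) ^ 2)
  end.

(* The minimizers chosen (beta_k, h_{k+1}, v^{k+1}) are arbitrary elements of the
   respective argmin sets. *)
Definition AGMsDR_SC_run {n} (opt : agm_option) (f : vec n -> R) (g : vec n -> vec n)
    (L mu : R) (x0 : vec n)
    (x v y : nat -> vec n) (beta h a A tau : nat -> R) : Prop :=
  A 0%nat = 0 /\ tau 0%nat = 1 /\ x 0%nat = x0 /\ v 0%nat = x0 /\
  forall k : nat,
    (0 <= beta k <= 1 /\
     (forall b, 0 <= b <= 1 ->
        f (vadd (v k) (vscal (beta k) (vsub (x k) (v k))))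
        <= f (vadd (v k) (vscal b (vsub (x k) (v k))))) /\
     y k = vadd (v k) (vscal (beta k) (vsub (x k) (v k)))) /\
    (match opt with
     | OptA =>
         x (S k) = vsub (y k) (vscal (/ L) (g (y k))) /\
         0 < a (S k) /\
         a (S k) ^ 2 / ((tau k + mu * a (S k)) * (A k + a (S k))) = / L
     | OptB =>
         let d := vscal (/ norm2 (g (y k))) (g (y k)) in
         0 <= h (S k) /\
         (forall t, 0 <= t -> f (vsub (y k) (vscal (h (S k)) d)) <= f (vsub (y k) (vscal t d))) /\
         x (S k) = vsub (y k) (vscal (h (S k)) d) /\
         let eqn := fun al : R =>
           (tau k + mu * al) * (A k + al) <> 0 /\
           f (y k)
           - al ^ 2 * (norm2 (g (y k))) ^ 2 / (2 * (tau k + mu * al) * (A k + al))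
           + mu * tau k * al * (norm2 (vsub (v k) (y k))) ^ 2
               / (2 * (tau k + mu * al) * (A k + al))
           = f (x (S k)) in
         eqn (a (S k)) /\ (forall al, eqn al -> al <= a (S k))
     end) /\
    A (S k) = A k + a (S k) /\
    tau (S k) = tau k + mu * a (S k) /\
    (forall z, psi f g mu x0 y a (S k) (v (S k)) <= psi f g mu x0 y a (S k) z).

(* Estimate-sequence argument.  The functions psi_k are quadratics with curvature
   tau_k = 1 + mu A_k that, weighted by A_k, stay above f at x_k and below f at x_*:
     A_k f(x_k) <= min psi_k <= psi_k(x_* ) <= A_k f(x_* ) + R^2 / 2,
   so f(x_k) - f(x_* ) <= R^2 / (2 A_k).  The invariant propagates by completing the
   square in psi_(k+1), using convexity and the optimality of the line search in y_k.
   Both options guarantee tau_(k+1) A_(k+1) <= L a_(k+1)^2: for option (a) with equality,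
   for option (b) because the gradient step certifies a root of the defining quadratic
   beyond t / L.  This makes sqrt A_k grow by 1 / (2 sqrt L) per step, and A_k
   geometrically by the factor 1 / (1 - sqrt (mu / L)). *)

From Stdlib Require Import Reals Lra Lia Psatz FunctionalExtensionality.
Open Scope R_scope.

Lemma vec_ext {n} (x y : vec n) : (forall i, x i = y i) -> x = y.
Proof. intros H; apply functional_extensionality; exact H. Qed.

Lemma sumFin_ext {n} (F G : Fin.t n -> R) :
  (forall i, F i = G i) -> sumFin n F = sumFin n G.
Proof.
  induction n as [|n IH]; simpl; intros H; [reflexivity|].
  rewrite H, (IH _ (fun i => G (Fin.FS i))); auto.
Qed.

Lemma sumFin_add {n} (F G : Fin.t n -> R) :
  sumFin n (fun i => F i + G i) = sumFin n F + sumFin n G.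
Proof. induction n as [|n IH]; simpl; [ring|]. rewrite IH; ring. Qed.

Lemma sumFin_sub {n} (F G : Fin.t n -> R) :
  sumFin n (fun i => F i - G i) = sumFin n F - sumFin n G.
Proof. induction n as [|n IH]; simpl; [ring|]. rewrite IH; ring. Qed.

Lemma sumFin_scal {n} c (F : Fin.t n -> R) :
  sumFin n (fun i => c * F i) = c * sumFin n F.
Proof. induction n as [|n IH]; simpl; [ring|]. rewrite IH; ring. Qed.

Lemma inner_sym {n} (x y : vec n) : inner x y = inner y x.
Proof. apply sumFin_ext; intros; ring. Qed.

Lemma inner_addl {n} (x y z : vec n) : inner (vadd x y) z = inner x z + inner y z.
Proof. unfold inner; rewrite <- sumFin_add; apply sumFin_ext; intros; unfold vadd; ring. Qed.

Lemma inner_subl {n} (x y z : vec n) : inner (vsub x y) z = inner x z - inner y z.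
Proof. unfold inner; rewrite <- sumFin_sub; apply sumFin_ext; intros; unfold vsub; ring. Qed.

Lemma inner_scall {n} c (x z : vec n) : inner (vscal c x) z = c * inner x z.
Proof. unfold inner; rewrite <- sumFin_scal; apply sumFin_ext; intros; unfold vscal; ring. Qed.

Lemma inner_addr {n} (x y z : vec n) : inner z (vadd x y) = inner z x + inner z y.
Proof. rewrite !(inner_sym z); apply inner_addl. Qed.

Lemma inner_subr {n} (x y z : vec n) : inner z (vsub x y) = inner z x - inner z y.
Proof. rewrite !(inner_sym z); apply inner_subl. Qed.

Lemma inner_scalr {n} c (x z : vec n) : inner z (vscal c x) = c * inner z x.
Proof. rewrite !(inner_sym z); apply inner_scall. Qed.

Ltac inner_expand :=
  repeat (rewrite inner_addl in * || rewrite inner_addr in * || rewrite inner_subl in *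
          || rewrite inner_subr in * || rewrite inner_scall in * || rewrite inner_scalr in *).

Lemma inner_nonneg {n} (x : vec n) : 0 <= inner x x.
Proof.
  unfold inner; induction n as [|n IH]; simpl; [lra|].
  specialize (IH (fun i => x (Fin.FS i))); simpl in IH; nra.
Qed.

Lemma inner_eq0 {n} (x : vec n) : inner x x = 0 -> x = vzero.
Proof.
  intros H; apply vec_ext; unfold vzero.
  induction n as [|n IH]; intros i; [inversion i|].
  pose proof (inner_nonneg (fun i => x (Fin.FS i))) as Htail.
  unfold inner in H, Htail; simpl in H.
  assert (H1 : x Fin.F1 = 0) by nra.
  assert (H2 : forall j, x (Fin.FS j) = 0)
    by (apply (IH (fun j => x (Fin.FS j))); unfold inner; nra).
  pattern i; apply Fin.caseS'; [exact H1 | exact H2].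
Qed.

Lemma inner_pos {n} (x : vec n) : x <> vzero -> 0 < inner x x.
Proof.
  intros H; destruct (inner_nonneg x) as [|E]; [assumption|].
  exfalso; apply H, inner_eq0; auto.
Qed.

Lemma norm2_sq {n} (x : vec n) : norm2 x ^ 2 = inner x x.
Proof. unfold norm2; simpl; rewrite Rmult_1_r; apply sqrt_sqrt, inner_nonneg. Qed.

Lemma norm2_scal {n} s (x : vec n) : norm2 (vscal s x) = Rabs s * norm2 x.
Proof.
  unfold norm2; rewrite inner_scall, inner_scalr, <- Rmult_assoc.
  rewrite sqrt_mult by (nra || apply inner_nonneg).
  rewrite <- Rsqr_def, sqrt_Rsqr_abs; reflexivity.
Qed.

Lemma inner_sub_swap {n} (x y : vec n) :
  inner (vsub x y) (vsub x y) = inner (vsub y x) (vsub y x).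
Proof. apply sumFin_ext; intros; unfold vsub; ring. Qed.

(* Peter-Paul inequality, from [0 <= |x - c y|^2]. *)
Lemma two_mul_inner_le {n} (x y : vec n) c :
  2 * c * inner x y <= inner x x + c ^ 2 * inner y y.
Proof.
  pose proof (inner_nonneg (vsub x (vscal c y))) as H.
  inner_expand; rewrite (inner_sym y x) in H; nra.
Qed.

Lemma derivable_pt_lim_line {n} (f : vec n -> R) g (p d : vec n) t :
  is_gradient f g ->
  derivable_pt_lim (fun s => f (vadd p (vscal s d))) t (inner (g (vadd p (vscal t d))) d).
Proof.
  intros Hgrad.
  set (q := vadd p (vscal t d)).
  assert (Hshift : forall s, vadd p (vscal (t + s) d) = vadd q (vscal s d))
    by (intros s; apply vec_ext; intros i; unfold q, vadd, vscal; ring).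
  destruct (inner_nonneg d) as [Hd | Hd].
  - assert (Hnd : 0 < norm2 d) by (apply sqrt_lt_R0; exact Hd).
    intros eps Heps.
    destruct (Hgrad q (eps / (2 * norm2 d))) as (delta & Hdelta & Hq).
    { apply Rdiv_lt_0_compat; lra. }
    assert (Hpos : 0 < delta / norm2 d) by (apply Rdiv_lt_0_compat; lra).
    exists (mkposreal _ Hpos); simpl; intros s Hs0 Hs.
    assert (Habs : 0 < Rabs s) by (apply Rabs_pos_lt; exact Hs0).
    assert (Hsmall : Rabs s * norm2 d < delta).
    { apply (Rmult_lt_compat_r (norm2 d)) in Hs; [|exact Hnd].
      unfold Rdiv in Hs; rewrite Rmult_assoc, Rinv_l in Hs; lra. }
    specialize (Hq (vscal s d)); rewrite norm2_scal, inner_scalr in Hq.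
    specialize (Hq (conj (Rmult_lt_0_compat _ _ Habs Hnd) Hsmall)).
    cbv beta; fold q; rewrite Hshift.
    replace ((f (vadd q (vscal s d)) - f q) / s - inner (g q) d)
      with ((f (vadd q (vscal s d)) - f q - s * inner (g q) d) / s) by (field; exact Hs0).
    unfold Rdiv; rewrite Rabs_mult, Rabs_inv.
    apply (Rmult_lt_reg_r (Rabs s)); [exact Habs|].
    rewrite Rmult_assoc, Rinv_l by lra.
    replace (eps / (2 * norm2 d) * (Rabs s * norm2 d)) with (eps / 2 * Rabs s) in Hq
      by (field; lra).
    nra.
  - assert (Hd0 : d = vzero) by (apply inner_eq0; auto).
    assert (Hconst : forall s, vadd p (vscal s d) = p)
      by (intros s; apply vec_ext; intros i; rewrite Hd0; unfold vadd, vscal, vzero; ring).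
    assert (Hzero : inner (g q) d = 0).
    { replace d with (vscal 0 d)
        by (apply vec_ext; intros i; rewrite Hd0; unfold vscal, vzero; ring).
      rewrite inner_scalr; ring. }
    fold q; rewrite Hzero.
    replace (fun s => f (vadd p (vscal s d))) with (fun _ : R => f p)
      by (apply functional_extensionality; intros s; rewrite Hconst; reflexivity).
    apply derivable_pt_lim_const.
Qed.

Lemma derivative_nonneg_of_right_min (phi : R -> R) t l r :
  0 < r -> derivable_pt_lim phi t l ->
  (forall s, 0 < s < r -> phi t <= phi (t + s)) -> 0 <= l.
Proof.
  intros Hr Hderiv Hmin.
  destruct (Rle_or_lt 0 l) as [|Hl]; [assumption|exfalso].
  destruct (Hderiv (- l / 2)) as [delta Hdelta]; [lra|].
  set (s := Rmin (delta / 2) (r / 2)).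
  assert (Hs : 0 < s) by (apply Rmin_glb_lt; destruct delta; simpl; lra).
  assert (Hsd : s < delta) by (eapply Rle_lt_trans; [apply Rmin_l|]; destruct delta; simpl; lra).
  assert (Hsr : s < r) by (eapply Rle_lt_trans; [apply Rmin_r|]; lra).
  specialize (Hdelta s (Rgt_not_eq _ _ Hs)); rewrite Rabs_right in Hdelta by lra.
  apply Rabs_def2 in Hdelta as [Hlo _]; [|exact Hsd].
  specialize (Hmin s (conj Hs Hsr)).
  assert (0 <= (phi (t + s) - phi t) / s)
    by (apply Rmult_le_pos; [lra | left; apply Rinv_0_lt_compat; lra]).
  lra.
Qed.

Lemma slope_nonneg_of_line_min {n} (f : vec n -> R) g (p d : vec n) r :
  is_gradient f g -> 0 < r ->
  (forall s, 0 < s < r -> f p <= f (vadd p (vscal s d))) -> 0 <= inner (g p) d.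
Proof.
  intros Hgrad Hr Hmin.
  assert (Hp0 : vadd p (vscal 0 d) = p)
    by (apply vec_ext; intros i; unfold vadd, vscal; ring).
  pose proof (derivable_pt_lim_line f g p d 0 Hgrad) as Hderiv; rewrite Hp0 in Hderiv.
  apply (derivative_nonneg_of_right_min _ 0 _ r Hr Hderiv).
  intros s Hs; rewrite Rplus_0_l, Hp0; apply Hmin, Hs.
Qed.

(* [y + s (v - y)] stays on the segment [[v, x]] for [0 < s < 1]. *)
Lemma segment_min_slope {n} (f : vec n -> R) g (x v : vec n) beta :
  is_gradient f g -> 0 <= beta <= 1 ->
  (forall b, 0 <= b <= 1 ->
     f (vadd v (vscal beta (vsub x v))) <= f (vadd v (vscal b (vsub x v)))) ->
  let y := vadd v (vscal beta (vsub x v)) in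
  0 <= inner (g y) (vsub v y).
Proof.
  intros Hgrad Hbeta Hmin y; apply (slope_nonneg_of_line_min f g _ _ 1 Hgrad Rlt_0_1).
  intros s Hs.
  replace (vadd y (vscal s (vsub v y))) with (vadd v (vscal (beta * (1 - s)) (vsub x v)))
    by (apply vec_ext; intros i; unfold y, vadd, vscal, vsub; ring).
  apply Hmin; nra.
Qed.

Lemma L_smooth_slope_increment {n} (f : vec n -> R) g L (p d : vec n) s :
  0 < L -> 0 < s -> L_smooth f g L ->
  inner (g (vadd p (vscal s d))) d - inner (g p) d <= L * s * inner d d.
Proof.
  intros HL Hs [_ Hlip].
  set (q := vadd p (vscal s d)).
  assert (Hqp : vsub q p = vscal s d)
    by (apply vec_ext; intros i; unfold q, vsub, vadd, vscal; ring).
  pose proof (Hlip q p) as Hl; rewrite Hqp, norm2_scal, Rabs_right in Hl by lra.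
  pose proof (sqrt_pos (inner (vsub (g q) (g p)) (vsub (g q) (g p)))).
  pose proof (sqrt_pos (inner d d)).
  assert (Hsq : inner (vsub (g q) (g p)) (vsub (g q) (g p)) <= (L * s) ^ 2 * inner d d)
    by (rewrite <- !norm2_sq; unfold norm2 in *; nra).
  pose proof (two_mul_inner_le (vsub (g q) (g p)) d (L * s)) as Hpp.
  rewrite inner_subl in Hpp.
  pose proof (inner_nonneg d).
  assert (0 < L * s) by nra.
  nra.
Qed.

(* Mean value theorem for [phi s = f (p + s d) - s <g p, d> - s^2 L |d|^2 / 2],
   whose derivative is nonpositive on [(0, 1)]. *)
Lemma descent {n} (f : vec n -> R) g L (p d : vec n) :
  0 < L -> L_smooth f g L ->
  f (vadd p d) <= f p + inner (g p) d + L / 2 * inner d d.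
Proof.
  intros HL Hsmooth.
  set (c1 := inner (g p) d); set (c2 := L / 2 * inner d d).
  set (phi := fun s => f (vadd p (vscal s d)) - c1 * s - c2 * (s * s)).
  set (phi' := fun s => inner (g (vadd p (vscal s d))) d - c1 - c2 * (2 * s)).
  assert (Hderiv : forall s, derivable_pt_lim phi s (phi' s)).
  { intros s.
    pose proof (derivable_pt_lim_id s) as Hid.
    pose proof (derivable_pt_lim_minus _ _ _ _ _
      (derivable_pt_lim_minus _ _ _ _ _ (derivable_pt_lim_line f g p d s (proj1 Hsmooth))
         (derivable_pt_lim_scal _ c1 _ _ Hid))
      (derivable_pt_lim_scal _ c2 _ _ (derivable_pt_lim_mult _ _ _ _ _ Hid Hid))) as H.
    unfold phi', id in H |- *.
    replace (c1 * 1) with c1 in H by ring.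
    replace (c2 * (1 * s + s * 1)) with (c2 * (2 * s)) in H by ring.
    exact H. }
  destruct (MVT_cor2 phi phi' 0 1 Rlt_0_1 (fun c _ => Hderiv c)) as (c & Hc & Hc01).
  pose proof (L_smooth_slope_increment f g L p d c HL (proj1 Hc01) Hsmooth).
  unfold phi, phi', c1, c2 in *.
  replace (vadd p (vscal 1 d)) with (vadd p d) in Hc
    by (apply vec_ext; intros i; unfold vadd, vscal; ring).
  replace (vadd p (vscal 0 d)) with p in Hc
    by (apply vec_ext; intros i; unfold vadd, vscal; ring).
  lra.
Qed.

Lemma gradient_step_descent {n} (f : vec n -> R) g L (p : vec n) :
  0 < L -> L_smooth f g L ->
  f (vsub p (vscal (/ L) (g p))) <= f p - inner (g p) (g p) / (2 * L).
Proof.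
  intros HL Hsmooth.
  pose proof (descent f g L p (vscal (- / L) (g p)) HL Hsmooth) as H.
  replace (vadd p (vscal (- / L) (g p))) with (vsub p (vscal (/ L) (g p))) in H
    by (apply vec_ext; intros i; unfold vadd, vsub, vscal; ring).
  inner_expand.
  replace (f p - inner (g p) (g p) / (2 * L))
    with (f p + - / L * inner (g p) (g p) + L / 2 * (- / L * (- / L * inner (g p) (g p))))
    by (field; lra).
  exact H.
Qed.

Lemma strongly_convex_gap {n} (f : vec n -> R) g mu (p z : vec n) :
  0 < mu -> strongly_convex f g mu ->
  f p - inner (g p) (g p) / (2 * mu) <= f z.
Proof.
  intros Hmu Hconvex.
  pose proof (Hconvex p z) as H; rewrite norm2_sq in H.
  pose proof (two_mul_inner_le (g p) (vscal (-1) (vsub z p)) mu) as Hpp.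
  inner_expand.
  apply (Rmult_le_reg_l (2 * mu)); [lra|].
  replace (2 * mu * (f p - inner (g p) (g p) / (2 * mu)))
    with (2 * mu * f p - inner (g p) (g p)) by (field; lra).
  nra.
Qed.

Definition quadratic {n} (t : R) (phi : vec n -> R) : Prop :=
  exists (l : vec n) (c : R), forall z, phi z = t / 2 * inner z z + inner l z + c.

Lemma quadratic_ext {n} t (phi chi : vec n -> R) :
  (forall z, phi z = chi z) -> quadratic t chi -> quadratic t phi.
Proof. intros E (l & c & H); exists l, c; intros z; rewrite E; apply H. Qed.

Lemma quadratic_add_scal {n} t1 t2 c (phi chi : vec n -> R) :
  quadratic t1 phi -> quadratic t2 chi ->
  quadratic (t1 + c * t2) (fun z => phi z + c * chi z).
Proof.
  intros (l1 & c1 & H1) (l2 & c2 & H2).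
  exists (vadd l1 (vscal c l2)), (c1 + c * c2); intros z.
  rewrite H1, H2; inner_expand; lra.
Qed.

Lemma quadratic_half_sq_dist {n} (p : vec n) :
  quadratic 1 (fun z => / 2 * inner (vsub z p) (vsub z p)).
Proof.
  exists (vscal (-1) p), (/ 2 * inner p p); intros z.
  inner_expand; rewrite (inner_sym z p); lra.
Qed.

Lemma quadratic_affine {n} (l : vec n) c : quadratic 0 (fun z => inner l z + c).
Proof. exists l, c; intros z; lra. Qed.

Lemma linear_coef_eq0_of_nonneg (a b : R) : (forall s, 0 <= b * s + a * s ^ 2) -> b = 0.
Proof.
  intros H.
  set (u := Rabs a + 1).
  assert (Hu : 0 < u) by (unfold u; pose proof (Rabs_pos a); lra).
  specialize (H (- b / u)).
  assert (E : u ^ 2 * (b * (- b / u) + a * (- b / u) ^ 2) = b ^ 2 * (a - u))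
    by (field; lra).
  assert (Hau : a - u <= -1) by (unfold u; pose proof (Rle_abs a); lra).
  assert (0 <= u ^ 2 * (b * (- b / u) + a * (- b / u) ^ 2)) by (apply Rmult_le_pos; nra).
  nra.
Qed.

(* At a minimizer the linear part vanishes, which leaves the pure quadratic term. *)
Lemma quadratic_min_split {n} t (phi : vec n -> R) v :
  quadratic t phi -> (forall z, phi v <= phi z) ->
  forall z, phi z = phi v + t / 2 * inner (vsub z v) (vsub z v).
Proof.
  intros (l & c & H) Hmin z.
  set (e := vsub z v).
  assert (Hexp : forall s, phi (vadd v (vscal s e)) - phi v
                           = (t * inner v e + inner l e) * s + t / 2 * inner e e * s ^ 2).
  { intros s; rewrite !H; inner_expand; rewrite (inner_sym e v); field. }
  assert (Hb : t * inner v e + inner l e = 0).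
  { apply (linear_coef_eq0_of_nonneg (t / 2 * inner e e)); intros s.
    rewrite <- Hexp; pose proof (Hmin (vadd v (vscal s e))); lra. }
  specialize (Hexp 1).
  replace (vadd v (vscal 1 e)) with z in Hexp
    by (apply vec_ext; intros i; unfold e, vadd, vscal, vsub; ring).
  rewrite Hb in Hexp; lra.
Qed.

(* Completing the square: the defect is [|T u - t w + a gy|^2 / 2] with [T = t + a mu]. *)
Lemma completed_square_lower_bound {n} t a mu (u w gy : vec n) :
  0 < t + a * mu ->
  (t * mu * a / 2 * inner w w + t * a * inner gy w - a ^ 2 / 2 * inner gy gy) / (t + a * mu)
  <= t / 2 * inner (vsub u w) (vsub u w) + a * inner gy u + a * mu / 2 * inner u u.
Proof.
  intros HT.
  set (N := vadd (vsub (vscal (t + a * mu) u) (vscal t w)) (vscal a gy)).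
  assert (Hsq : (t + a * mu) * (t / 2 * inner (vsub u w) (vsub u w) + a * inner gy u
                                + a * mu / 2 * inner u u)
                - (t * mu * a / 2 * inner w w + t * a * inner gy w - a ^ 2 / 2 * inner gy gy)
                = / 2 * inner N N).
  { unfold N; inner_expand.
    rewrite (inner_sym w u), (inner_sym gy u), (inner_sym gy w).
    field. }
  pose proof (inner_nonneg N).
  apply (Rmult_le_reg_l (t + a * mu)); [exact HT|].
  replace ((t + a * mu) * ((t * mu * a / 2 * inner w w + t * a * inner gy w
                            - a ^ 2 / 2 * inner gy gy) / (t + a * mu)))
    with (t * mu * a / 2 * inner w w + t * a * inner gy w - a ^ 2 / 2 * inner gy gy)
    by (field; lra).
  lra.
Qed.

Lemma quadratic_root_ge (c2 c1 c0 u : R) :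
  c2 < 0 -> 0 <= c2 * u ^ 2 + c1 * u + c0 ->
  exists z, u <= z /\ c2 * z ^ 2 + c1 * z + c0 = 0.
Proof.
  intros Hc2 Hu.
  set (P := fun z => c2 * z ^ 2 + c1 * z + c0).
  destruct (Req_dec (P u) 0) as [E|E]; [exists u; split; [lra|exact E]|].
  set (M := Rabs u + 1 + (Rabs c1 + Rabs c0) / (- c2)).
  pose proof (Rle_abs u); pose proof (Rle_abs c1); pose proof (Rle_abs c0).
  pose proof (Rabs_pos c1); pose proof (Rabs_pos c0).
  assert (Hq : 0 <= (Rabs c1 + Rabs c0) / (- c2))
    by (apply Rmult_le_pos; [lra | left; apply Rinv_0_lt_compat; lra]).
  assert (HM1 : 1 <= M) by (unfold M; pose proof (Rabs_pos u); lra).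
  assert (HuM : u < M) by (unfold M; lra).
  (* For [M >= 1], [P M <= M (c2 M + |c1| + |c0|) = M c2 (|u| + 1) < 0]. *)
  assert (HPM : P M < 0).
  { assert (E2 : c2 * M + Rabs c1 + Rabs c0 = c2 * (Rabs u + 1)) by (unfold M; field; lra).
    pose proof (Rabs_pos u).
    unfold P; nra. }
  assert (HPu : 0 < P u) by (unfold P in *; lra).
  destruct (IVT (fun z => - P z) u M) as (z & Hz & Hz0);
    [unfold P; reg | exact HuM | lra | lra |].
  exists z; split; [lra|]. unfold P in Hz0; lra.
Qed.

Definition stepsize_equation (t A0 mu G W D al : R) : Prop :=
  (t + mu * al) * (A0 + al) <> 0 /\
  D = al ^ 2 * G / (2 * (t + mu * al) * (A0 + al))
      - mu * t * al * W / (2 * (t + mu * al) * (A0 + al)).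

Lemma stepsize_equation_iff t A0 mu G W D al :
  0 < (t + mu * al) * (A0 + al) ->
  stepsize_equation t A0 mu G W D al
  <-> 2 * ((t + mu * al) * (A0 + al)) * D = al ^ 2 * G - mu * t * al * W.
Proof.
  intros HT.
  assert (H1 : t + mu * al <> 0) by (intros E0; rewrite E0, Rmult_0_l in HT; lra).
  assert (H2 : A0 + al <> 0) by (intros E0; rewrite E0, Rmult_0_r in HT; lra).
  unfold stepsize_equation; split.
  - intros [_ E]; rewrite E; field; auto.
  - intros E; split; [lra|].
    apply (Rmult_eq_reg_l (2 * ((t + mu * al) * (A0 + al)))); [|lra].
    rewrite E; field; auto.
Qed.

(* The equation is quadratic in [al] with leading coefficient [2 mu D - G < 0] and is
   nonnegative at [t / L], so it has a root beyond [t / L]; the largest root [b] is then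
   positive, and [G <= 2 L D] turns the equation at [b] into the growth bound. *)
Lemma largest_stepsize_root t A0 mu L G W D b :
  0 < t -> 0 <= A0 -> 0 <= mu -> 0 < L -> 0 < G -> 0 <= W ->
  G <= 2 * L * D -> 2 * mu * D < G ->
  stepsize_equation t A0 mu G W D b ->
  (forall al, stepsize_equation t A0 mu G W D al -> al <= b) ->
  0 < b /\ (t + mu * b) * (A0 + b) <= L * b ^ 2.
Proof.
  intros Ht HA0 Hmu HL HG HW HGD HDG Hb Hmax.
  set (T := fun al => (t + mu * al) * (A0 + al)).
  assert (HD : 0 < D) by (apply (Rmult_lt_reg_l (2 * L)); lra).
  assert (HQ : forall al, 2 * T al * D - al ^ 2 * G + mu * t * al * W
    = (2 * mu * D - G) * al ^ 2 + (2 * (t + mu * A0) * D + mu * t * W) * al + 2 * t * A0 * D)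
    by (intros al; unfold T; ring).
  assert (Hs : 0 <= 2 * T (t / L) * D - (t / L) ^ 2 * G + mu * t * (t / L) * W).
  { set (s := t / L).
    assert (Hs0 : 0 < s) by (apply Rdiv_lt_0_compat; lra).
    assert (HLs : L * s = t) by (unfold s; field; lra).
    clearbody s.
    assert (HTs : L * s ^ 2 <= T s).
    { replace (L * s ^ 2) with (t * s) by (rewrite <- HLs; ring).
      assert (0 <= mu * s) by (apply Rmult_le_pos; lra).
      unfold T; nra. }
    assert (0 <= mu * t * s * W) by (repeat apply Rmult_le_pos; lra).
    assert (0 <= T s * (2 * L * D - G)) by (apply Rmult_le_pos; nra).
    assert (T s * G <= 2 * L * T s * D) by lra.
    nra. }
  rewrite HQ in Hs.
  assert (Hc2 : 2 * mu * D - G < 0) by lra.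
  destruct (quadratic_root_ge _ _ _ _ Hc2 Hs) as (z & Hzs & Hz).
  assert (Hz0 : 0 < z) by (pose proof (Rdiv_lt_0_compat t L Ht HL); lra).
  assert (HTz : 0 < T z) by (unfold T; apply Rmult_lt_0_compat; nra).
  assert (Hzb : z <= b).
  { apply Hmax, stepsize_equation_iff; [exact HTz|].
    rewrite <- HQ in Hz; fold (T z); lra. }
  assert (Hb0 : 0 < b) by lra.
  assert (HTb : 0 < T b) by (unfold T; apply Rmult_lt_0_compat; nra).
  apply stepsize_equation_iff in Hb; [|exact HTb]; fold (T b) in Hb |- *.
  split; [exact Hb0|].
  assert (0 <= mu * t * b * W) by (repeat apply Rmult_le_pos; lra).
  assert (T b * G <= L * (b ^ 2 * G)) by nra.
  apply (Rmult_le_reg_r G); nra.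
Qed.

Lemma sqrt_div_le_1 (mu L : R) : 0 < L -> mu <= L -> sqrt (mu / L) <= 1.
Proof.
  intros HL HmuL; rewrite <- sqrt_1; apply sqrt_le_1_alt.
  apply Rmult_le_reg_r with L; [lra|]; unfold Rdiv; rewrite Rmult_assoc, Rinv_l; lra.
Qed.

Section EstimateSequenceGrowth.

Variables (A a : nat -> R) (L mu : R).
Hypotheses (HL : 0 < L) (Hmu : 0 <= mu) (HmuL : mu <= L) (HA0 : A 0%nat = 0).
Hypothesis Hstep : forall k, 0 < a (S k) /\ A (S k) = A k + a (S k) /\
  (1 + mu * A (S k)) * A (S k) <= L * a (S k) ^ 2.

Lemma estimate_nonneg k : 0 <= A k.
Proof.
  induction k as [|k IH]; [rewrite HA0; lra|].
  destruct (Hstep k) as (Ha & HA & _); lra.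
Qed.

Lemma estimate_le_L_mul_sq k : A (S k) <= L * a (S k) ^ 2.
Proof.
  destruct (Hstep k) as (_ & _ & Hg); pose proof (estimate_nonneg (S k)).
  assert (0 <= mu * A (S k) * A (S k)) by (apply Rmult_le_pos; [apply Rmult_le_pos|]; lra).
  nra.
Qed.

(* [A_(k+1) <= L a_(k+1)^2] forces [sqrt A] to grow by at least [1 / (2 sqrt L)] per step. *)
Lemma estimate_growth_quadratic k : INR k ^ 2 <= 4 * L * A k.
Proof.
  assert (Hsqrt : INR k <= 2 * sqrt L * sqrt (A k)).
  { induction k as [|k IH].
    { simpl; pose proof (sqrt_pos L); pose proof (sqrt_pos (A 0%nat)); nra. }
    destruct (Hstep k) as (Ha & HA & _); pose proof (estimate_le_L_mul_sq k) as Hsq.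
    pose proof (estimate_nonneg k) as HAk.
    pose proof (sqrt_sqrt _ HAk) as Hq; pose proof (sqrt_pos (A k)).
    pose proof (sqrt_sqrt (A (S k)) ltac:(lra)) as Hp.
    pose proof (sqrt_lt_R0 (A (S k)) ltac:(lra)) as Hp0.
    pose proof (sqrt_sqrt L ltac:(lra)) as Hs; pose proof (sqrt_lt_R0 L HL) as Hs0.
    set (p := sqrt (A (S k))) in *; set (q := sqrt (A k)) in *; set (s := sqrt L) in *.
    assert (Hqp : q <= p) by nra.
    assert (Ha2 : a (S k) = p * p - q * q) by lra.
    rewrite Ha2 in Hsq.
    assert (H1 : p * p <= (s * (p * p - q * q)) * (s * (p * p - q * q))) by nra.
    assert (H2 : p <= s * (p * p - q * q))
      by (apply Rsqr_incr_0_var; [exact H1 | apply Rmult_le_pos; nra]).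
    assert (H3 : 1 <= 2 * s * (p - q)) by nra.
    rewrite S_INR; lra. }
  pose proof (pos_INR k); pose proof (estimate_nonneg k).
  replace (4 * L * A k) with ((2 * sqrt L * sqrt (A k)) ^ 2)
    by (rewrite !Rpow_mult_distr, !pow2_sqrt; lra).
  apply pow_incr; lra.
Qed.

Lemma estimate_contraction k : A k <= (1 - sqrt (mu / L)) * A (S k).
Proof.
  destruct (Hstep k) as (Ha & HA & Hg); pose proof (estimate_nonneg (S k)) as HA1.
  assert (HmuL0 : 0 <= mu / L)
    by (apply Rmult_le_pos; [lra | left; apply Rinv_0_lt_compat; lra]).
  set (q := sqrt (mu / L)).
  assert (Hq2 : q ^ 2 = mu / L) by (apply pow2_sqrt; lra).
  assert (Hq0 : 0 <= q) by apply sqrt_pos.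
  (* [mu A_(k+1)^2 <= (1 + mu A_(k+1)) A_(k+1) <= L a_(k+1)^2] *)
  assert (Hsq : (q * A (S k)) ^ 2 <= a (S k) ^ 2).
  { rewrite Rpow_mult_distr, Hq2.
    apply Rmult_le_reg_r with L; [lra|].
    replace (mu / L * A (S k) ^ 2 * L) with (mu * A (S k) ^ 2) by (field; lra).
    nra. }
  assert (q * A (S k) <= a (S k)) by (pose proof (Rmult_le_pos _ _ Hq0 HA1); nra).
  lra.
Qed.

Lemma estimate_growth_geometric k : 1 <= L * (1 - sqrt (mu / L)) ^ k * A (S k).
Proof.
  pose proof (sqrt_div_le_1 mu L HL HmuL).
  induction k as [|k IH].
  - destruct (Hstep 0%nat) as (Ha & HA & Hg); rewrite HA0, Rplus_0_l in HA.
    rewrite HA in Hg |- *.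
    assert (0 <= mu * a 1%nat * a 1%nat) by (apply Rmult_le_pos; [apply Rmult_le_pos|]; lra).
    simpl; nra.
  - pose proof (pow_le (1 - sqrt (mu / L)) k ltac:(lra)).
    assert (L * (1 - sqrt (mu / L)) ^ k * A (S k)
            <= L * (1 - sqrt (mu / L)) ^ k * ((1 - sqrt (mu / L)) * A (S (S k))))
      by (apply Rmult_le_compat_l; [apply Rmult_le_pos | apply estimate_contraction]; lra).
    simpl; lra.
Qed.

End EstimateSequenceGrowth.

Section AGMsDR_SC.

Variables (n : nat) (f : vec n -> R) (g : vec n -> vec n) (L mu : R) (xs x0 : vec n)
  (opt : agm_option) (x v y : nat -> vec n) (beta h a A tau : nat -> R).
Hypotheses (Hmu : 0 < mu) (HmuL : mu < L) (Hsmooth : L_smooth f g L)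
  (Hconvex : strongly_convex f g mu) (Hxs : forall z, f xs <= f z)
  (Hrun : AGMsDR_SC_run opt f g L mu x0 x v y beta h a A tau)
  (Hgrad : forall k, g (y k) <> vzero).

Local Notation Psi := (psi f g mu x0 y a).

Lemma A_0 : A 0%nat = 0.
Proof. destruct Hrun as (H & _); exact H. Qed.

Lemma tau_0 : tau 0%nat = 1.
Proof. destruct Hrun as (_ & H & _); exact H. Qed.

Lemma v_0 : v 0%nat = x0.
Proof. destruct Hrun as (_ & _ & _ & H & _); exact H. Qed.

Lemma A_S k : A (S k) = A k + a (S k).
Proof. destruct Hrun as (_ & _ & _ & _ & H); apply (H k). Qed.

Lemma tau_S k : tau (S k) = tau k + mu * a (S k).
Proof. destruct Hrun as (_ & _ & _ & _ & H); apply (H k). Qed.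

Lemma v_S_min k z : Psi (S k) (v (S k)) <= Psi (S k) z.
Proof. destruct Hrun as (_ & _ & _ & _ & H); apply (H k). Qed.

Lemma tau_eq k : tau k = 1 + mu * A k.
Proof.
  induction k as [|k IH]; [rewrite tau_0, A_0; ring|].
  rewrite tau_S, A_S, IH; ring.
Qed.

Lemma line_search_slope k : 0 <= inner (g (y k)) (vsub (v k) (y k)).
Proof.
  destruct Hrun as (_ & _ & _ & _ & H); destruct (H k) as ((Hb & Hmin & Hy) & _).
  rewrite Hy; exact (segment_min_slope f g _ _ _ (proj1 Hsmooth) Hb Hmin).
Qed.

Lemma f_y_le_f_x k : f (y k) <= f (x k).
Proof.
  destruct Hrun as (_ & _ & _ & _ & H); destruct (H k) as ((_ & Hmin & Hy) & _).
  specialize (Hmin 1 ltac:(lra)).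
  replace (vadd (v k) (vscal 1 (vsub (x k) (v k)))) with (x k) in Hmin
    by (apply vec_ext; intros i; unfold vadd, vscal, vsub; ring).
  rewrite <- Hy in Hmin; exact Hmin.
Qed.

(* [x_(k+1)] is not a minimizer: the next line search cannot increase [f], and the
   gradient step from [y_(k+1)] strictly decreases it since [g (y_(k+1)) <> 0]. *)
Lemma f_xs_lt k : f xs < f (x (S k)).
Proof.
  pose proof (f_y_le_f_x (S k)).
  pose proof (gradient_step_descent f g L (y (S k)) ltac:(lra) Hsmooth).
  pose proof (inner_pos _ (Hgrad (S k))).
  assert (0 < inner (g (y (S k))) (g (y (S k))) / (2 * L)) by (apply Rdiv_lt_0_compat; lra).
  specialize (Hxs (vsub (y (S k)) (vscal (/ L) (g (y (S k)))))); lra.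
Qed.

Lemma gradient_step_bound k :
  f (x (S k)) <= f (y k) - inner (g (y k)) (g (y k)) / (2 * L).
Proof.
  pose proof (gradient_step_descent f g L (y k) ltac:(lra) Hsmooth) as Hdesc.
  destruct Hrun as (_ & _ & _ & _ & H); destruct (H k) as (_ & Hstep & _).
  destruct opt.
  - destruct Hstep as (Hx & _); rewrite Hx; exact Hdesc.
  - cbv zeta in Hstep; destruct Hstep as (_ & Hls & Hx & _).
    pose proof (norm2_sq (g (y k))) as Hng.
    assert (Hng0 : 0 < norm2 (g (y k)))
      by (apply sqrt_lt_R0, inner_pos, Hgrad).
    rewrite Hx; eapply Rle_trans;
      [apply (Hls (norm2 (g (y k)) / L)); left; apply Rdiv_lt_0_compat; lra|].
    replace (vsub (y k) (vscal (norm2 (g (y k)) / L) (vscal (/ norm2 (g (y k))) (g (y k)))))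
      with (vsub (y k) (vscal (/ L) (g (y k))))
      by (apply vec_ext; intros i; unfold vsub, vscal; field; lra).
    exact Hdesc.
Qed.

Lemma decrease_bounds k :
  inner (g (y k)) (g (y k)) <= 2 * L * (f (y k) - f (x (S k))) /\
  2 * mu * (f (y k) - f (x (S k))) < inner (g (y k)) (g (y k)).
Proof.
  pose proof (gradient_step_bound k) as Hgs.
  pose proof (strongly_convex_gap f g mu (y k) xs Hmu Hconvex) as Hgap.
  pose proof (f_xs_lt k).
  set (G := inner (g (y k)) (g (y k))) in *.
  split.
  - apply (Rmult_le_reg_r (/ (2 * L))); [apply Rinv_0_lt_compat; lra|].
    replace (2 * L * (f (y k) - f (x (S k))) * / (2 * L)) with (f (y k) - f (x (S k)))
      by (field; lra).
    unfold Rdiv in Hgs; lra.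
  - apply (Rmult_lt_reg_r (/ (2 * mu))); [apply Rinv_0_lt_compat; lra|].
    replace (2 * mu * (f (y k) - f (x (S k))) * / (2 * mu)) with (f (y k) - f (x (S k)))
      by (field; lra).
    unfold Rdiv in Hgap; lra.
Qed.

Lemma iteration_estimate k : 0 <= A k ->
  0 < a (S k) /\ tau (S k) * A (S k) <= L * a (S k) ^ 2 /\
  f (x (S k)) <= f (y k)
    - a (S k) ^ 2 * inner (g (y k)) (g (y k)) / (2 * tau (S k) * A (S k))
    + mu * tau k * a (S k) * inner (vsub (v k) (y k)) (vsub (v k) (y k))
        / (2 * tau (S k) * A (S k)).
Proof.
  intros HA.
  pose proof (gradient_step_bound k) as Hgs.
  pose proof (inner_pos _ (Hgrad k)) as HG.
  pose proof (inner_nonneg (vsub (v k) (y k))) as HW.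
  pose proof (tau_eq k) as Ht.
  destruct (decrease_bounds k) as [HGD HDG].
  rewrite tau_S, A_S.
  set (G := inner (g (y k)) (g (y k))) in *.
  set (W := inner (vsub (v k) (y k)) (vsub (v k) (y k))) in *.
  set (t := tau k) in *; set (A0 := A k) in *; set (al := a (S k)).
  assert (Ht0 : 0 < t) by nra.
  destruct Hrun as (_ & _ & _ & _ & H); destruct (H k) as (_ & Hstep & _).
  destruct opt.
  - destruct Hstep as (_ & Ha & Heq); fold t A0 al in Ha, Heq.
    assert (HT : (t + mu * al) * (A0 + al) = L * al ^ 2).
    { replace ((t + mu * al) * (A0 + al)) with (L * ((t + mu * al) * (A0 + al)) * / L)
        by (field; lra).
      rewrite <- Heq; field; split; nra. }
    split; [exact Ha|]; split; [lra|].
    replace (2 * (t + mu * al) * (A0 + al)) with (2 * (L * al ^ 2)) by (rewrite <- HT; ring).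
    replace (al ^ 2 * G / (2 * (L * al ^ 2))) with (G / (2 * L)) by (field; split; lra).
    assert (0 <= mu * t * al * W / (2 * (L * al ^ 2))).
    { apply Rmult_le_pos; [repeat apply Rmult_le_pos; lra|].
      left; apply Rinv_0_lt_compat; pose proof (pow_lt al 2 Ha); nra. }
    lra.
  - cbv zeta in Hstep; destruct Hstep as (_ & _ & _ & Heqn & Hmax).
    rewrite !norm2_sq in Heqn, Hmax; fold G W t A0 al in Heqn, Hmax.
    set (D := f (y k) - f (x (S k))).
    assert (Hroot : forall al', stepsize_equation t A0 mu G W D al'
        <-> (t + mu * al') * (A0 + al') <> 0 /\
            f (y k) - al' ^ 2 * G / (2 * (t + mu * al') * (A0 + al'))
            + mu * t * al' * W / (2 * (t + mu * al') * (A0 + al')) = f (x (S k))).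
    { intros al'; unfold stepsize_equation, D; split; intros [Hne E]; split; auto; lra. }
    fold D in HGD, HDG.
    destruct (largest_stepsize_root t A0 mu L G W D al Ht0 HA (Rlt_le _ _ Hmu) ltac:(lra)
                HG HW HGD HDG (proj2 (Hroot al) Heqn)
                (fun al' Hal' => Hmax al' (proj1 (Hroot al') Hal'))) as [Ha HT].
    split; [exact Ha|]; split; [lra|].
    destruct Heqn as [_ E]; lra.
Qed.

Lemma A_nonneg k : 0 <= A k.
Proof.
  induction k as [|k IH]; [rewrite A_0; lra|].
  destruct (iteration_estimate k IH) as (Ha & _); rewrite A_S; lra.
Qed.

Lemma A_growth_step k : 0 < a (S k) /\ A (S k) = A k + a (S k) /\
  (1 + mu * A (S k)) * A (S k) <= L * a (S k) ^ 2.
Proof.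
  destruct (iteration_estimate k (A_nonneg k)) as (Ha & HT & _).
  rewrite <- tau_eq; auto using A_S.
Qed.

Lemma Psi_quadratic k : quadratic (tau k) (Psi k).
Proof.
  induction k as [|k IH].
  - rewrite tau_0.
    apply (quadratic_ext _ _ (fun z => / 2 * inner (vsub z x0) (vsub z x0)));
      [intros z; cbn [psi]; rewrite norm2_sq; reflexivity | apply quadratic_half_sq_dist].
  - set (gk := g (y k)).
    assert (Hmodel : quadratic (0 + mu * 1) (fun z => inner gk z + (f (y k) - inner gk (y k))
                       + mu * (/ 2 * inner (vsub z (y k)) (vsub z (y k)))))
      by (apply quadratic_add_scal; [apply quadratic_affine | apply quadratic_half_sq_dist]).
    rewrite Rplus_0_l, Rmult_1_r in Hmodel.
    rewrite tau_S, (Rmult_comm mu).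
    eapply quadratic_ext; [|exact (quadratic_add_scal _ _ (a (S k)) _ _ IH Hmodel)].
    intros z; cbn [psi]; fold gk; rewrite norm2_sq, inner_subr; field.
Qed.

Lemma v_min k z : Psi k (v k) <= Psi k z.
Proof.
  destruct k as [|k]; [|apply v_S_min].
  rewrite v_0; cbn [psi]; rewrite !norm2_sq.
  replace (vsub x0 x0) with (vscal 0 x0) by (apply vec_ext; intros i; unfold vsub, vscal; ring).
  rewrite inner_scall.
  pose proof (inner_nonneg (vsub z x0)); lra.
Qed.

Lemma Psi_split k z :
  Psi k z = Psi k (v k) + tau k / 2 * inner (vsub z (v k)) (vsub z (v k)).
Proof. exact (quadratic_min_split _ _ _ (Psi_quadratic k) (v_min k) z). Qed.

Lemma Psi_xs_le k : Psi k xs <= A k * f xs + / 2 * inner (vsub xs x0) (vsub xs x0).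
Proof.
  induction k as [|k IH]; cbn [psi]; [rewrite A_0, norm2_sq; lra|].
  destruct (A_growth_step k) as (Ha & HA & _); rewrite HA.
  pose proof (Hconvex (y k) xs) as Hsc.
  assert (a (S k) * (f (y k) + inner (g (y k)) (vsub xs (y k))
                     + mu / 2 * norm2 (vsub xs (y k)) ^ 2) <= a (S k) * f xs)
    by (apply Rmult_le_compat_l; lra).
  lra.
Qed.

Lemma A_f_le_Psi_min k : A k * f (x k) <= Psi k (v k).
Proof.
  induction k as [|k IH].
  { rewrite A_0; pose proof (v_min 0 x0) as H0; cbn [psi] in H0 |- *; rewrite norm2_sq in *.
    pose proof (inner_nonneg (vsub (v 0%nat) x0)); lra. }
  destruct (iteration_estimate k (A_nonneg k)) as (Ha & _ & Hbound).
  pose proof (line_search_slope k) as Hslope.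
  pose proof (f_y_le_f_x k) as Hfy.
  pose proof (tau_eq k); pose proof (A_nonneg k) as HA.
  cbn [psi]; rewrite (Psi_split k (v (S k))), A_S, norm2_sq; rewrite tau_S, A_S in Hbound.
  set (z := v (S k)).
  pose proof (completed_square_lower_bound (tau k) (a (S k)) mu
                (vsub z (y k)) (vsub (v k) (y k)) (g (y k))) as Hcs.
  replace (vsub (vsub z (y k)) (vsub (v k) (y k))) with (vsub z (v k)) in Hcs
    by (apply vec_ext; intros i; unfold vsub; ring).
  set (G := inner (g (y k)) (g (y k))) in *.
  set (W := inner (vsub (v k) (y k)) (vsub (v k) (y k))) in *.
  set (t := tau k) in *; set (A0 := A k) in *; set (al := a (S k)) in *.
  assert (Ht : 0 < t) by nra.
  specialize (Hcs ltac:(nra)).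
  assert (A0 * f (y k) <= A0 * f (x k)) by (apply Rmult_le_compat_l; lra).
  assert (Hcs' : (t * mu * al / 2 * W - al ^ 2 / 2 * G) / (t + al * mu)
                 <= (t * mu * al / 2 * W + t * al * inner (g (y k)) (vsub (v k) (y k))
                     - al ^ 2 / 2 * G) / (t + al * mu)).
  { apply Rmult_le_compat_r; [left; apply Rinv_0_lt_compat; nra|].
    assert (0 <= t * al * inner (g (y k)) (vsub (v k) (y k))) by (apply Rmult_le_pos; nra).
    lra. }
  assert (Hx' : (A0 + al) * f (x (S k)) <= (A0 + al) * f (y k)
                + (t * mu * al / 2 * W - al ^ 2 / 2 * G) / (t + al * mu)).
  { replace ((A0 + al) * f (y k) + (t * mu * al / 2 * W - al ^ 2 / 2 * G) / (t + al * mu))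
      with ((A0 + al) * (f (y k) - al ^ 2 * G / (2 * (t + mu * al) * (A0 + al))
                         + mu * t * al * W / (2 * (t + mu * al) * (A0 + al))))
      by (field; split; nra).
    apply Rmult_le_compat_l; lra. }
  lra.
Qed.

Lemma A_gap_le k : A k * (f (x k) - f xs) <= / 2 * inner (vsub xs x0) (vsub xs x0).
Proof.
  pose proof (A_f_le_Psi_min k); pose proof (v_min k xs); pose proof (Psi_xs_le k).
  lra.
Qed.

End AGMsDR_SC.

Lemma gap_le_of_growth_quadratic (e Ak R2 L : R) (k : nat) :
  (0 < k)%nat -> 0 <= L -> 0 <= e -> Ak * e <= / 2 * R2 -> INR k ^ 2 <= 4 * L * Ak ->
  e <= 2 * L * R2 / INR k ^ 2.
Proof.
  intros Hk HL He Hgap Hgrowth.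
  pose proof (pow_lt (INR k) 2 (lt_0_INR k Hk)) as Hk2.
  apply (Rmult_le_reg_r (INR k ^ 2)); [exact Hk2|].
  replace (2 * L * R2 / INR k ^ 2 * INR k ^ 2) with (4 * L * (/ 2 * R2))
    by (field; apply not_0_INR; lia).
  assert (4 * L * (Ak * e) <= 4 * L * (/ 2 * R2)) by (apply Rmult_le_compat_l; lra).
  nra.
Qed.

Lemma gap_le_of_growth_geometric (e Ak R2 L c : R) :
  0 <= L -> 0 <= e -> 0 <= R2 -> 0 <= c -> Ak * e <= / 2 * R2 -> 1 <= L * c * Ak ->
  e <= c * L * R2.
Proof.
  intros HL He HR2 Hc Hgap Hgrowth.
  assert (HLc : 0 <= L * c) by (apply Rmult_le_pos; lra).
  assert (e <= e * (L * c * Ak)) by nra.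
  assert ((Ak * e) * (L * c) <= / 2 * R2 * (L * c)) by (apply Rmult_le_compat_r; lra).
  assert (0 <= R2 * (L * c)) by (apply Rmult_le_pos; lra).
  nra.
Qed.

Theorem mainTheorem7 (n : nat) (f : vec n -> R) (g : vec n -> vec n) (L mu : R)
  (xs x0 : vec n) (opt : agm_option)
  (x v y : nat -> vec n) (beta h a A tau : nat -> R) :
  0 < mu -> mu < L ->
  L_smooth f g L ->
  strongly_convex f g mu ->
  (forall z, f xs <= f z) ->
  AGMsDR_SC_run opt f g L mu x0 x v y beta h a A tau ->
  (forall k, g (y k) <> vzero) ->
  forall k : nat, (1 <= k)%nat ->
    f (x k) - f xs <=
    Rmin (2 * L * (norm2 (vsub x0 xs)) ^ 2 / (INR k) ^ 2)
         ((1 - sqrt (mu / L)) ^ (k - 1) * L * (norm2 (vsub x0 xs)) ^ 2).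
Proof.
  intros Hmu HmuL Hsmooth Hconvex Hxs Hrun Hgrad k Hk.
  pose proof (A_gap_le n f g L mu xs x0 opt x v y beta h a A tau
                Hmu HmuL Hsmooth Hconvex Hxs Hrun Hgrad k) as Hgap.
  pose proof (A_growth_step n f g L mu xs x0 opt x v y beta h a A tau
                Hmu HmuL Hsmooth Hconvex Hxs Hrun Hgrad) as Hstep.
  pose proof (A_0 n f g L mu x0 opt x v y beta h a A tau Hrun) as HA0.
  pose proof (Hxs (x k)).
  rewrite norm2_sq, inner_sub_swap.
  apply Rmin_glb.
  - apply (gap_le_of_growth_quadratic _ (A k)); [lia | lra | lra | exact Hgap |].
    exact (estimate_growth_quadratic A a L mu ltac:(lra) ltac:(lra) ltac:(lra) HA0 Hstep k).
  - destruct k as [|k]; [lia|]; replace (S k - 1)%nat with k by lia.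
    apply (gap_le_of_growth_geometric _ (A (S k)));
      [lra | lra | apply inner_nonneg | | exact Hgap |].
    + apply pow_le; pose proof (sqrt_div_le_1 mu L ltac:(lra) ltac:(lra)); lra.
    + exact (estimate_growth_geometric A a L mu ltac:(lra) ltac:(lra) ltac:(lra) HA0 Hstep k).
Qed.
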